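(* Let $\lambda\in(0,1)$ and let $G$ be a finite simple connected graph with $n\ge 2$ vertices. Then $$\min_{1\le D\le n-1}\left[\frac{\lambda\left[1-(D+1)\lambda^{D}+D\lambda^{D+1}\right]}{(\lambda-1)^2}+(n-D-1)D\lambda^{D}\right]\;\le\; mt^{e}_{\lambda}(G).$$ Moreover, this lower bound is attained at the starting vertex of a broom on $n$ vertices, i.e. there is a broom $B$ on $n$ vertices with $mt^{e}_{\lambda}(B)$ equal to the left-hand side, the minimum of $t^e_\lambda$ over the vertices of $B$ being attained at its starting vertex.
   Context: $d(u,v)$ denotes graph distance. For a vertex $u$ of $G=(V,E)$, $t^{e}_{\lambda}(u)=\sum_{v\in V\setminus\{u\}} d(u,v)\lambda^{d(u,v)}$, and $mt^{e}_{\lambda}(G)=\min\{t^{e}_{\lambda}(u):u\in V\}$. A broom on $n$ vertices (with parameter $D$, $1\le D\le n-1$) is the graph consisting of a path $u=v_0v_1\cdots v_D$ together with $n-D-1$ further vertices, each adjacent only to $v_{D-1}$; equivalently, it is obtained by identifying a pendant vertex of a star with an end-vertex of a path. The vertex $u=v_0$ is called the starting vertex of the broom. *)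

From mathcomp Require Import all_boot all_order all_algebra.
Set Implicit Arguments. Unset Strict Implicit. Unset Printing Implicit Defensive.
Import Order.TTheory GRing.Theory Num.Theory.

Section Defs.
Variable T : finType.
Variable e : rel T.

Definition simple_graph := symmetric e /\ irreflexive e.
Definition connected_graph := forall u v : T, connect e u v.

Fixpoint ball (k : nat) (u : T) : {set T} :=
  match k with
  | 0 => [set u]
  | k.+1 => ball k u :|: [set y | [exists x in ball k u, e x y]]
  end.

(* graph distance: least k with v within k steps of u (correct for connected
   graphs, where d(u,v) < #|T|) *)
Definition dist (u v : T) : nat := find (fun k => v \in ball k u) (iota 0 #|T|).

Open Scope ring_scope.
Variable R : realFieldType.

Definition te (lam : R) (u : T) : R :=
  \sum_(v in T | v != u) (dist u v)%:R * lam ^+ dist u v.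

Definition mte (lam : R) : R :=
  match [pick u : T] with
  | Some u0 => \big[Num.min/te lam u0]_(u : T) te lam u
  | None => 0
  end.
End Defs.

(* The broom on n vertices 0..n-1 with parameter D: path 0-1-...-D and every
   vertex j > D adjacent to D-1. Starting vertex is 0. *)
Definition broom_edge (n D : nat) (i j : 'I_n) : bool :=
  ((j == i.+1 :> nat) && (j <= D)%N) || ((i == D.-1 :> nat) && (D < j)%N).
Definition broom (n D : nat) : rel 'I_n :=
  fun i j => broom_edge D i j || broom_edge D j i.
Arguments broom n D : clear implicits.

Open Scope ring_scope.
Definition broom_bound (R : realFieldType) (n D : nat) (lam : R) : R :=
  lam * (1 - (D.+1)%:R * lam ^+ D + D%:R * lam ^+ D.+1) / (lam - 1) ^+ 2
  + (n - D - 1)%:R * D%:R * lam ^+ D.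

Definition min_broom_bound (R : realFieldType) (n : nat) (lam : R) : R :=
  \big[Num.min/broom_bound n 1 lam]_(1 <= D < n) broom_bound n D lam.

(** Let [u] be a vertex of eccentricity [D] and put [f k = k lam^k], so that
    [t^e_lam(u)] is the sum of [f (d(u,v))] over [v <> u].  Every distance
    [1, ..., D] is realised by some vertex, and [f] is unimodal (the ratios
    [f (k+1) / f k = (k+1) lam / k] decrease), so on [[1, D]] it stays above
    [m = min (f 1) (f D)].  Charging one vertex to each distance and [m] to
    each of the other [n - 1 - D] vertices gives
    [t^e_lam(u) >= f 1 + ... + f D + (n - 1 - D) m].  If [m = f D] this is the
    value of the broom with parameter [D] at its starting vertex; otherwise it
    is at least [(n - 1) f 1], the value for [D = 1].  At the starting vertex
    of a broom the vertex at distance [k < D] is unique and all others are at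
    distance [D], so equality holds. *)
From mathcomp Require Import all_boot all_order all_algebra zify ring lra.
Import Order.TTheory GRing.Theory Num.Theory.
Set Implicit Arguments. Unset Strict Implicit. Unset Printing Implicit Defensive.

Section Balls.
Variables (T : finType) (e : rel T) (u : T).

Lemma ball_step k x y : x \in ball e k u -> e x y -> y \in ball e k.+1 u.
Proof.
by move=> xk exy; rewrite /= in_setU in_set; apply/orP; right; apply/existsP; exists x; rewrite xk.
Qed.

Lemma ball_mono k l : (k <= l)%N -> ball e k u \subset ball e l u.
Proof.
apply: (homo_leq (f := fun k => ball e k u) (r := fun A B : {set T} => A \subset B)).
- by move=> A; exact: subxx.
- by move=> B A C; exact: subset_trans.
- by move=> j; exact: subsetUl.
Qed.

Lemma ball_path p k x :
  x \in ball e k u -> path e x p -> last x p \in ball e (k + size p) u.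
Proof.
elim: p k x => [|y p IH] k x xk /=; first by rewrite addn0.
by case/andP=> exy yp; rewrite addnS -addSn; apply: IH yp; exact: ball_step exy.
Qed.

Lemma connect_ball v : connect e u v -> v \in ball e #|T|.-1 u.
Proof.
case/connectP=> p up ->; case: (shortenP up) => q uq q_uniq _.
have size_q : (size q <= #|T|.-1)%N.
  by have := max_card (mem (u :: q)); rewrite (card_uniqP q_uniq) /=; lia.
apply: (subsetP (ball_mono size_q)).
by have := @ball_path q 0 u; rewrite add0n set11; apply.
Qed.

Lemma ball_connect k v : v \in ball e k u -> connect e u v.
Proof.
elim: k v => [|k IH] v /=; first by rewrite in_set1 => /eqP ->.
rewrite in_setU in_set => /orP[/IH //|/existsP[x /andP[xk exv]]].
exact: connect_trans (IH _ xk) (connect1 exv).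
Qed.

End Balls.

Section Distance.
Variables (T : finType) (e : rel T).
Hypothesis conn : connected_graph e.
Variable u : T.

Lemma leq_dist_ball v k : (dist e u v <= k)%N = (v \in ball e k u).
Proof.
pose P k := v \in ball e k u.
have card_gt0 : (0 < #|T|)%N by apply/card_gt0P; exists u.
have has_P : has P (iota 0 #|T|).
  by apply/hasP; exists #|T|.-1; rewrite ?mem_iota ?ltn_predL //; exact: connect_ball.
have dist_lt : (dist e u v < #|T|)%N by rewrite -(size_iota 0 #|T|) -has_find.
have v_dist : P (dist e u v) by have := nth_find 0 has_P; rewrite nth_iota.
apply/idP/idP => [dk | vk]; first exact: subsetP (ball_mono e u dk) _ v_dist.
rewrite leqNgt; apply/negP => kd.
by have := before_find 0 kd; rewrite nth_iota ?add0n ?(ltn_trans kd) //; rewrite /P vk.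
Qed.

Lemma dist_le_card v : (dist e u v <= #|T|.-1)%N.
Proof. by rewrite leq_dist_ball connect_ball. Qed.

Lemma dist_eq0 v : (dist e u v == 0%N) = (v == u).
Proof. by rewrite -leqn0 leq_dist_ball in_set1. Qed.

Lemma dist_edge x y : e x y -> (dist e u y <= (dist e u x).+1)%N.
Proof. by move=> exy; rewrite leq_dist_ball (ball_step _ exy) // -leq_dist_ball. Qed.

Lemma dist_pred v k : dist e u v = k.+1 -> exists2 x, dist e u x = k & e x v.
Proof.
move=> dv; have : v \in ball e k.+1 u by rewrite -leq_dist_ball dv.
rewrite /= in_setU -leq_dist_ball dv ltnn in_set => /existsP[x /andP[xk exv]].
exists x => //; apply/eqP; rewrite eqn_leq leq_dist_ball xk -ltnS -dv.
exact: dist_edge.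
Qed.

Lemma dist_layer v k : (k <= dist e u v)%N -> exists w, dist e u w = k.
Proof.
move dv: (dist e u v) => d; elim: d v dv => [|d IH] v dv kd.
  by move: kd; rewrite leqn0 => /eqP ->; exists v.
case: (ltngtP k d.+1) kd => // [kd _|-> _]; last by exists v.
by have [x dx _] := dist_pred dv; apply: IH dx _.
Qed.

Definition ecc := \max_(v : T) dist e u v.

Lemma dist_le_ecc v : (dist e u v <= ecc)%N.
Proof. exact: leq_bigmax. Qed.

Lemma ecc_le_card : (ecc <= #|T|.-1)%N.
Proof. by apply/bigmax_leqP => v _; exact: dist_le_card. Qed.

Lemma ecc_gt0 : (1 < #|T|)%N -> (0 < ecc)%N.
Proof.
move=> card_gt1; have /card_gt0P[w w_neq_u] : (0 < #|predC1 u|)%N by rewrite cardC1; lia.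
by apply: leq_trans (dist_le_ecc w); rewrite lt0n dist_eq0.
Qed.

Lemma ecc_layer k : (k <= ecc)%N -> exists w, dist e u w = k.
Proof.
have [v ->] : {v | ecc = dist e u v}.
  by apply: bigop.eq_bigmax; apply/card_gt0P; exists u.
exact: dist_layer.
Qed.

End Distance.

Local Open Scope ring_scope.

Section Layers.
Variables (R : numDomainType) (T : finType) (P : pred T) (d : T -> nat).

Lemma sum_layers_le (h : nat -> R) D :
  (forall k, (1 <= k <= D)%N -> exists2 v, P v & d v = k) ->
  (forall v, P v -> 0 <= h (d v)) ->
  \sum_(1 <= k < D.+1) h k <= \sum_(v | P v) h (d v).
Proof.
move=> layer h_ge0.
(* Sort the right-hand side by the value of [d]: each fibre over [[1, D]] is nonempty. *)
apply: (@le_trans _ _ (\sum_(1 <= k < D.+1) \sum_(v | P v && (k == d v)) h k)).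
  apply: ler_sum_nat => k kD.
  have [w Pw dw] := layer k kD.
  rewrite (bigD1 w) /= ?Pw ?dw ?eqxx // lerDl sumr_ge0 // => v /andP[/andP[Pv /eqP ->] _].
  exact: h_ge0.
rewrite (exchange_big_dep P) /=; last by move=> k v _ /andP[].
apply: ler_sum => v Pv.
under eq_bigl do rewrite Pv.
by rewrite big_nat1_eq; case: ifP => // _; exact: h_ge0.
Qed.

End Layers.

Lemma homo_leq_range (U : Type) (r : U -> U -> Prop) a b (F : nat -> U) :
  (forall x, r x x) -> (forall y x z, r x y -> r y z -> r x z) ->
  (forall j, (a <= j < b)%N -> r (F j) (F j.+1)) -> (a <= b)%N -> r (F a) (F b).
Proof.
move=> r_refl r_trans Fstep ab; move: Fstep; rewrite -(subnKC ab).
elim: (b - a)%N => [|n IH] Fstep; first by rewrite addn0.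
rewrite addnS; apply: (r_trans _ _ _ (IH _) (Fstep _ _)) => [j|]; last by lia.
by move=> /andP[aj jn]; apply: Fstep; lia.
Qed.

Section TeTerm.
Variables (R : realFieldType) (lam : R).

Definition te_term (k : nat) : R := k%:R * lam ^+ k.

Lemma te_termS_sub j : te_term j.+1 - te_term j = lam ^+ j * (j.+1%:R * lam - j%:R).
Proof. by rewrite /te_term exprS -natr1; ring. Qed.

Lemma sum_te_term D :
  (lam - 1) ^+ 2 * \sum_(1 <= k < D.+1) te_term k =
  lam * (1 - D.+1%:R * lam ^+ D + D%:R * lam ^+ D.+1).
Proof.
elim: D => [|D IH]; first by rewrite big_geq //; ring.
by rewrite big_nat_recr //= mulrDr IH /te_term !exprS -!natr1; ring.
Qed.

Lemma teE (T : finType) (e : rel T) u :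
  te e lam u = \sum_(v | v != u) te_term (dist e u v).
Proof. exact: eq_bigl. Qed.

Hypotheses (lam_gt0 : 0 < lam) (lam_lt1 : lam < 1).

Lemma te_term_ge_min k D :
  (1 <= k <= D)%N -> Num.min (te_term 1) (te_term D) <= te_term k.
Proof.
move=> /andP[k_gt0 kD].
(* [te_term j.+1 - te_term j] has the sign of [slope j], which decreases with [j]. *)
pose slope j : R := j.+1%:R * lam - j%:R.
have slope_anti i j : (i <= j)%N -> slope j <= slope i.
  move=> ij; have : (i%:R <= j%:R :> R) by rewrite ler_nat.
  have := ltW lam_lt1; rewrite /slope -!natr1; nra.
have lam_exp_ge0 j : 0 <= lam ^+ j by rewrite exprn_ge0 // ltW.
case: (lerP 0 (slope k.-1)) => slope_k.
  rewrite ge_min; apply/orP; left.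
  apply: (homo_leq_range lexx le_trans) => // j /andP[_ jk].
  rewrite -subr_ge0 te_termS_sub mulr_ge0 //.
  apply: le_trans slope_k (slope_anti _ _ _); lia.
rewrite ge_min; apply/orP; right.
apply: (homo_leq_range (r := fun x y => y <= x) lexx (fun y x z xy yz => le_trans yz xy)) => //.
move=> j /andP[kj _].
rewrite -subr_le0 te_termS_sub mulr_ge0_le0 //.
apply: ltW (le_lt_trans (slope_anti _ _ _) slope_k); lia.
Qed.

Lemma broom_boundE n D :
  broom_bound n D lam = \sum_(1 <= k < D.+1) te_term k + (n - D - 1)%:R * te_term D.
Proof.
have lam_neq1 : (lam - 1) ^+ 2 != 0 by rewrite expf_neq0 // subr_eq0 lt_eqF.
by rewrite /broom_bound -sum_te_term mulrAC mulfV // mul1r /te_term mulrA.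
Qed.

End TeTerm.

Lemma min_broom_bound_le (R : realFieldType) (lam : R) n D :
  (1 <= D < n)%N -> min_broom_bound n lam <= broom_bound n D lam.
Proof. by move=> Dn; apply: ge_bigmin_seq; rewrite ?mem_index_iota. Qed.

Lemma min_broom_bound_attained (R : realFieldType) (lam : R) n : (1 < n)%N ->
  exists2 D, (1 <= D < n)%N & min_broom_bound n lam = broom_bound n D lam.
Proof.
move=> n_gt1; rewrite /min_broom_bound big_seq.
elim/big_ind: _ => [|x y [a an ->] [b bn ->]|D]; first by exists 1%N.
  by rewrite minEle; case: ifP => _; [exists a|exists b].
by rewrite mem_index_iota; exists D.
Qed.

Section LowerBound.
Variables (R : realFieldType) (lam : R).
Hypotheses (lam_gt0 : 0 < lam) (lam_lt1 : lam < 1).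

Definition layer_bound n D : R :=
  \sum_(1 <= k < D.+1) te_term lam k + (n - D - 1)%:R * Num.min (te_term lam 1) (te_term lam D).

Lemma min_broom_bound_le_layer_bound n D :
  (1 <= D < n)%N -> min_broom_bound n lam <= layer_bound n D.
Proof.
move=> /andP[D_gt0 Dn]; rewrite /layer_bound.
case: (lerP (te_term lam D) (te_term lam 1)) => [fD|f1].
  by rewrite -(broom_boundE lam_lt1); apply: min_broom_bound_le; rewrite D_gt0.
have one_n : (1 <= 1 < n)%N by rewrite (leq_ltn_trans D_gt0 Dn).
apply: le_trans (min_broom_bound_le lam one_n) _.
have sum_ge : te_term lam 1 *+ D <= \sum_(1 <= k < D.+1) te_term lam k.
  have -> : te_term lam 1 *+ D = \sum_(1 <= k < D.+1) te_term lam 1.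
    by rewrite sumr_const_nat subn1.
  apply: ler_sum_nat => k kD.
  by have := te_term_ge_min lam_gt0 lam_lt1 kD; rewrite min_l // ltW.
rewrite -mulr_natl in sum_ge; rewrite (broom_boundE lam_lt1) big_nat1.
rewrite !natrB ?subn_gt0 ?(ltnW Dn) ?(ltnW one_n) //; lra.
Qed.

Variables (T : finType) (e : rel T).
Hypothesis conn : connected_graph e.

Lemma layer_bound_le_te u : layer_bound #|T| (ecc e u) <= te e lam u.
Proof.
rewrite /layer_bound; set D := ecc e u; set m := Num.min _ _.
have layer k : (1 <= k <= D)%N -> exists2 v, v != u & dist e u v = k.
  case/andP=> k_gt0 kD; have [w dw] := ecc_layer conn kD.
  by exists w => //; rewrite -(dist_eq0 conn) dw -lt0n.
have term_ge v : v != u -> 0 <= te_term lam (dist e u v) - m.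
  move=> vu; rewrite subr_ge0; apply: te_term_ge_min => //.
  by rewrite lt0n (dist_eq0 conn) vu dist_le_ecc.
have := sum_layers_le (h := fun k => te_term lam k - m) layer term_ge.
have -> : \sum_(v | v != u) (te_term lam (dist e u v) - m) = te e lam u - m *+ #|T|.-1.
  by rewrite sumrB teE -(cardC1 u) -sumr_const.
rewrite sumrB sumr_const_nat subSS subn0 -!(mulr_natl m).
have -> : (#|T| - D - 1 = #|T|.-1 - D)%N by lia.
rewrite natrB; last by have := ecc_le_card conn u.
lra.
Qed.

Lemma te_ge_min_broom_bound u : (1 < #|T|)%N -> min_broom_bound #|T| lam <= te e lam u.
Proof.
move=> card_gt1; apply: le_trans (layer_bound_le_te u).
apply: min_broom_bound_le_layer_bound; rewrite (ecc_gt0 conn u card_gt1).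
by have := ecc_le_card conn u; lia.
Qed.

End LowerBound.

Section Mte.
Variables (R : realFieldType) (lam : R) (T : finType) (e : rel T).

Lemma mte_le u : mte e lam <= te e lam u.
Proof. by rewrite /mte; case: pickP => [u0 _|/(_ u) //]; exact: bigmin_le. Qed.

Lemma mte_ge c : (0 < #|T|)%N -> (forall u, c <= te e lam u) -> c <= mte e lam.
Proof.
move=> /card_gt0P[v _] c_le; rewrite /mte; case: pickP => [u0 _|/(_ v) //].
exact: le_bigmin.
Qed.

End Mte.

Section Broom.
Variables (n D : nat).
Hypotheses (D_gt0 : (0 < D)%N) (D_lt_n : (D < n)%N).

Lemma ball_broom (z : 'I_n) k :
  z = 0%N :> nat -> ball (broom n D) k z = [set j : 'I_n | (j <= k)%N || (D <= k)%N].
Proof.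
move=> z0; elim: k => [|k IH]; apply/setP => j.
  by rewrite /= in_set1 in_set -val_eqE /= z0 leqn0 leqNgt D_gt0 orbF.
rewrite /= in_setU IH !in_set.
apply/idP/idP => [/orP[|/existsP[x /andP[]]]|jk]; rewrite ?in_set /broom /broom_edge; try lia.
apply/orP; have [|jk'] := boolP ((j <= k)%N || (D <= k)%N); [by left | right].
have kn : (k < n)%N by lia.
apply/existsP; exists (Ordinal kn).
by rewrite in_set /broom /broom_edge /=; lia.
Qed.

Lemma broom_connected : connected_graph (broom n D).
Proof.
pose z : 'I_n := Ordinal (leq_ltn_trans (leq0n D) D_lt_n).
have from_z a : connect (broom n D) z a.
  by apply: (@ball_connect _ _ _ D); rewrite (@ball_broom z) // in_set leqnn orbT.
move=> a b; apply: connect_trans (from_z b).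
have broom_sym : symmetric (broom n D) by move=> x y; rewrite /broom orbC.
by rewrite (sym_connect_sym broom_sym) from_z.
Qed.

Variable z : 'I_n.
Hypothesis z0 : z = 0%N :> nat.

Lemma dist_broom j : dist (broom n D) z j = minn j D.
Proof.
have j_dist : j \in ball (broom n D) (dist (broom n D) z j) z.
  by rewrite -(leq_dist_ball broom_connected).
move: j_dist; rewrite (ball_broom _ z0) in_set => j_dist.
apply/eqP; rewrite eqn_leq (leq_dist_ball broom_connected) (ball_broom _ z0) in_set; lia.
Qed.

Lemma te_broom (R : realFieldType) (lam : R) :
  lam < 1 -> te (broom n D) lam z = broom_bound n D lam.
Proof.
move=> lam_lt1; rewrite teE (broom_boundE lam_lt1).
under eq_bigr do rewrite dist_broom.
have -> : \sum_(v | v != z) te_term lam (minn v D) = \sum_(v : 'I_n) te_term lam (minn v D).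
  by rewrite [RHS](bigD1 z) //= z0 min0n /te_term mul0r add0r.
rewrite -(big_mkord xpredT (fun v => te_term lam (minn v D))) (big_cat_nat _ (n := D.+1)) //=.
rewrite big_ltn // min0n {1}/te_term mul0r add0r; congr (_ + _).
  by apply: eq_big_nat => k /andP[_ kD]; rewrite (minn_idPl _).
rewrite (eq_big_nat _ _ (F2 := fun=> te_term lam D)); last first.
  by move=> k /andP[Dk _]; rewrite (minn_idPr _) // ltnW.
by rewrite sumr_const_nat mulr_natl -subnDA addn1.
Qed.

End Broom.

Theorem theorem2 (R : realFieldType) (lam : R) (T : finType) (e : rel T) :
  0 < lam < 1 -> (2 <= #|T|)%N -> simple_graph e -> connected_graph e ->
  min_broom_bound #|T| lam <= mte e lam /\
  exists2 D : nat, (1 <= D <= #|T| - 1)%N &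
    mte (broom #|T| D) lam = min_broom_bound #|T| lam /\
    (forall i0 : 'I_#|T|, nat_of_ord i0 = 0%N ->
       te (broom #|T| D) lam i0 = min_broom_bound #|T| lam).
Proof.
(* Only the (strong) connectivity of [e] is used, not its simplicity. *)
move=> /andP[lam_gt0 lam_lt1] card_gt1 _ conn.
have card_gt0 : (0 < #|T|)%N := ltnW card_gt1.
split; first by apply: mte_ge => // u; exact: te_ge_min_broom_bound.
have [D /andP[D_gt0 D_lt] minE] := min_broom_bound_attained lam card_gt1.
have te_start (i0 : 'I_#|T|) :
    i0 = 0%N :> nat -> te (broom #|T| D) lam i0 = min_broom_bound #|T| lam.
  by move=> i0_0; rewrite minE te_broom.
exists D; first by rewrite D_gt0 subn1 -ltnS prednK.
split=> //; apply/le_anti/andP; split.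
  by rewrite -(te_start (Ordinal card_gt0)) // mte_le.
apply: mte_ge => [|u]; first by rewrite card_ord.
have := te_ge_min_broom_bound lam_gt0 lam_lt1 (broom_connected D_gt0 D_lt) u.
by rewrite card_ord; apply.
Qed.
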